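(* Let $\mathcal{G}$ be a $2$-$(n,b,k,r,\lambda)$ design. Then \[ \frac{n\lambda}{k}\leq e(\mathcal{G})\leq\frac{(n-1)\lambda}{k-1}. \] Moreover, if $\mathcal{G}$ is a symmetric design, then $e(\mathcal{G})=k=r$.
   Context: A $2$-$(n,b,k,r,\lambda)$ design is regarded as a $k$-uniform $r$-regular hypergraph $\mathcal{G}$ on $n$ vertices with $b$ edges (edges are $k$-element vertex subsets) such that every pair of distinct vertices lies in exactly $\lambda$ common edges. It is symmetric if $n=b$. For a proper nonempty $S\subset V(\mathcal{G})$ with $\overline{S}=V(\mathcal{G})\setminus S$, $E(S,\overline{S})$ is the set of edges containing vertices of both $S$ and $\overline{S}$; the edge connectivity $e(\mathcal{G})$ is the minimum of $|E(S,\overline{S})|$ over all proper nonempty $S$. *)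

From mathcomp Require Import all_boot all_order all_algebra.
Set Implicit Arguments. Unset Strict Implicit. Unset Printing Implicit Defensive.

(* A hypergraph on the finite vertex type T is a set of edges E : {set {set T}}.
   n = #|T|, b = #|E|. *)

Definition design (T : finType) (E : {set {set T}}) (k r lam : nat) : Prop :=
  [/\ forall e, e \in E -> #|e| = k,
      forall v : T, #|[set e in E | v \in e]| = r
    & forall u v : T, u != v -> #|[set e in E | (u \in e) && (v \in e)]| = lam].

Definition cut (T : finType) (E : {set {set T}}) (S : {set T}) : {set {set T}} :=
  [set e in E | (e :&: S != set0) && (e :\: S != set0)].

(* The neutral element #|E| is an upper bound for every cut size, so the
   value is the true minimum whenever a proper nonempty S exists (#|T| >= 2). *)
Definition edge_conn (T : finType) (E : {set {set T}}) : nat :=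
  \big[minn/#|E|]_(S : {set T} | (S != set0) && (S != setT)) #|cut E S|.

(* For a proper nonempty S with s = |S| and t = n - s, count the triples
   (u, v, e) with u in S, v outside S and both in the edge e: this gives
   s t lam = sum_e |e /\ S| |e \ S|.  An edge with a vertices in S and b outside
   satisfies a b n <= k s t (since a <= s, b <= t and a + b = k), and only cut
   edges contribute, so n lam <= k |E(S, S-bar)|.  The upper bound is the cut
   around a single vertex, which has r edges, together with the replication
   identity r (k - 1) = lam (n - 1).  For a symmetric design n r = b k forces
   r = k, and the two bounds squeeze e(G) to k. *)
From mathcomp Require Import all_boot all_order all_algebra.
From mathcomp Require Import zify.
Import Order.TTheory GRing.Theory Num.Theory.
Set Implicit Arguments. Unset Strict Implicit.

Lemma card_set_in_sum (U : finType) (A : {set U}) (p : pred U) :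
  #|[set x in A | p x]| = \sum_(x in A) p x.
Proof.
rewrite -sum1dep_card big_mkcondr /=.
by apply: eq_bigr => x _; case: (p x).
Qed.

Lemma leq_mul_harmonic a b s t :
  a <= s -> b <= t -> a * b * (s + t) <= (a + b) * (s * t).
Proof.
move=> /subnKC <- /subnKC <-.
move: (s - a) (t - b) => x y.
nia.
Qed.

Lemma set1_proper (T : finType) (v : T) :
  1 < #|T| -> ([set v] != set0) && ([set v] != setT).
Proof.
move=> T_gt1; rewrite -cards_eq0 cards1 /=; apply: contraTneq T_gt1 => v_all.
by rewrite -cardsT -v_all cards1.
Qed.

Section Hypergraph.
Variables (T : finType) (E : {set {set T}}).

Lemma sum_pair_degree (A B : {set T}) :
  \sum_(u in A) \sum_(v in B) #|[set e in E | (u \in e) && (v \in e)]|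
  = \sum_(e in E) #|e :&: A| * #|e :&: B|.
Proof.
under eq_bigr => u _ do under eq_bigr => v _ do rewrite card_set_in_sum.
under eq_bigr => u _ do rewrite exchange_big.
rewrite exchange_big; apply: eq_bigr => e _.
have cardIE C : #|e :&: C| = \sum_(x in C) (x \in e).
  by rewrite -card_set_in_sum; apply: eq_card => x; rewrite !inE andbC.
rewrite !cardIE big_distrl /=; apply: eq_bigr => u _.
by rewrite big_distrr /=; apply: eq_bigr => v _; rewrite mulnb.
Qed.

Lemma sum_degree : \sum_v #|[set e in E | v \in e]| = \sum_(e in E) #|e|.
Proof.
under eq_bigr => v _ do rewrite card_set_in_sum.
rewrite exchange_big; apply: eq_bigr => e _.
by rewrite -sum1_card [RHS]big_mkcond.
Qed.

Lemma cut_subset S : cut E S \subset E.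
Proof. by apply/subsetP => e; rewrite inE => /andP[]. Qed.

Lemma sum_cross_cut S :
  \sum_(e in E) #|e :&: S| * #|e :&: ~: S|
  = \sum_(e in cut E S) #|e :&: S| * #|e :&: ~: S|.
Proof.
rewrite big_mkcond [RHS]big_mkcond; apply: eq_bigr => e _.
rewrite inE -setDE; case: (e \in E) => //=.
by case: ifP => // /nandP[] /negPn/eqP ->; rewrite cards0 ?muln0.
Qed.

Lemma cardsI1 (e : {set T}) v : #|e :&: [set v]| = (v \in e).
Proof. by have := cardsID [set v] e; rewrite (cardsD1 v e) setDE; lia. Qed.

Lemma cut_set1 v : (forall e, e \in E -> 1 < #|e|) ->
  cut E [set v] = [set e in E | v \in e].
Proof.
move=> E_gt1; apply/setP => e; rewrite !inE.
case eE: (e \in E) => //=.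
rewrite -!card_gt0 cardsI1 lt0b andb_idr // => ve.
by have := cardsD1 v e; have := E_gt1 e eE; rewrite ve; lia.
Qed.

Lemma leq_card_cross (e S : {set T}) :
  #|T| * (#|e :&: S| * #|e :&: ~: S|) <= #|e| * (#|S| * #|~: S|).
Proof.
rewrite -(cardsC S) -(cardsID S e) setDE mulnC.
by apply: leq_mul_harmonic; apply/subset_leq_card/subsetIr.
Qed.

Lemma edge_conn_le_cut S :
  S != set0 -> S != setT -> edge_conn E <= #|cut E S|.
Proof.
move=> S0 ST; apply: (bigmin_le_cond #|E| (fun S => #|cut E S|)).
by rewrite S0 ST.
Qed.

Lemma edge_conn_attained : 1 < #|T| ->
  exists2 S : {set T}, (S != set0) && (S != setT) & edge_conn E = #|cut E S|.
Proof.
move=> T_gt1; have /card_gt0P [v _] : 0 < #|T| by lia.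
have v_proper := set1_proper v T_gt1.
have cut_le S : #|cut E S| <= #|E| := subset_leq_card (cut_subset S).
have [S S_proper attained] :=
  eq_bigmin [set v] (fun S : {set T} => (S != set0) && (S != setT))
    (fun S => #|cut E S|) v_proper (fun S _ => cut_le S).
by exists S; rewrite // -attained minEnat.
Qed.

End Hypergraph.

Section Design.
Variables (T : finType) (E : {set {set T}}) (k r lam : nat).
Hypothesis design_E : design E k r lam.

Lemma design_card_incidence : #|T| * r = #|E| * k.
Proof.
case: design_E => cardE degE _.
have := sum_degree E.
under eq_bigr => v _ do rewrite degE.
under [RHS]eq_bigr => e eE do rewrite cardE //.
by rewrite !sum_nat_const cardT mulnC.
Qed.

Lemma design_replication : 0 < #|T| -> r * (k - 1) = lam * (#|T| - 1).
Proof.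
case: design_E => cardE degE pairE /card_gt0P [v _].
have := sum_pair_degree E [set v] (~: [set v]).
rewrite big_set1.
under eq_bigr => w w_ne_v.
  rewrite pairE; last by move: w_ne_v; rewrite !inE eq_sym.
  over.
under [RHS]eq_bigr => e eE.
  have -> : #|e :&: ~: [set v]| = #|e| - (v \in e).
    by rewrite -setDE [#|e|](cardsD1 v) addKn.
  rewrite cardsI1 cardE //.
  have -> : (v \in e) * (k - (v \in e)) = (v \in e) * (k - 1) by case: (v \in e).
  over.
rewrite sum_nat_const cardsC1 -big_distrl -card_set_in_sum degE /=.
lia.
Qed.

Lemma design_cut_lower S :
  S != set0 -> S != setT -> #|T| * lam <= k * #|cut E S|.
Proof.
case: design_E => cardE _ pairE S0 ST.
have st_gt0 : 0 < #|S| * #|~: S|.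
  rewrite muln_gt0 !card_gt0 S0 /=.
  by apply: contraNneq ST => /(congr1 (@setC _)); rewrite setCK setC0 => ->.
have cross_count : #|S| * (#|~: S| * lam)
    = \sum_(e in cut E S) #|e :&: S| * #|e :&: ~: S|.
  rewrite -sum_cross_cut -sum_pair_degree -!sum_nat_const.
  apply: eq_bigr => u uS; apply: eq_bigr => v vS; apply/esym/pairE.
  by apply: contraTneq vS => <-; rewrite inE uS.
have : #|T| * (#|S| * (#|~: S| * lam)) <= #|cut E S| * (k * (#|S| * #|~: S|)).
  rewrite cross_count big_distrr -sum_nat_const /=.
  apply: leq_sum => e /(subsetP (cut_subset E S)) eE.
  by rewrite -(cardE e eE) leq_card_cross.
by rewrite -(leq_pmul2r st_gt0); nia.
Qed.

Lemma design_edge_conn_lower : 1 < #|T| -> #|T| * lam <= k * edge_conn E.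
Proof.
move=> /(edge_conn_attained E) [S /andP[S0 ST] ->].
exact: design_cut_lower.
Qed.

Lemma design_edge_conn_le_degree : 1 < #|T| -> 1 < k -> edge_conn E <= r.
Proof.
case: design_E => cardE degE _ T_gt1 k_gt1.
have /card_gt0P [v _] : 0 < #|T| by lia.
have /andP[v0 vT] := set1_proper v T_gt1.
rewrite -(degE v) -cut_set1 => [|e eE]; last by rewrite cardE.
exact: edge_conn_le_cut.
Qed.

Lemma symmetric_design_degree : 0 < #|T| -> #|T| = #|E| -> r = k.
Proof.
move=> T_gt0 symmetric; apply/eqP.
by rewrite -(eqn_pmul2l T_gt0) {2}symmetric design_card_incidence.
Qed.

Lemma symmetric_design_edge_conn :
  1 < #|T| -> 1 < k -> #|T| = #|E| -> edge_conn E = k.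
Proof.
move=> T_gt1 k_gt1 symmetric.
have r_eq_k := symmetric_design_degree (ltnW T_gt1) symmetric.
have lower := design_edge_conn_lower T_gt1.
have upper := design_edge_conn_le_degree T_gt1 k_gt1.
have replication := design_replication (ltnW T_gt1).
rewrite r_eq_k in upper replication.
have lam_gt0 : 0 < lam.
  by rewrite lt0n; apply: contra_eqN replication => /eqP->; rewrite muln_eq0; lia.
have : k * (k - 1) < k * edge_conn E.
  rewrite replication; apply: leq_trans lower.
  by rewrite mulnBr muln1 mulnC ltn_subrL lam_gt0 muln_gt0 lam_gt0; lia.
rewrite ltn_mul2l; lia.
Qed.

End Design.

Local Open Scope ring_scope.

Theorem theorem3p9 (T : finType) (E : {set {set T}}) (k r lam : nat) :
  (1 < #|T|)%N -> (2 <= k)%N -> design E k r lam ->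
  [/\ ((#|T| * lam)%:R / k%:R <= (edge_conn E)%:R :> rat),
      ((edge_conn E)%:R <= ((#|T| - 1) * lam)%:R / (k - 1)%:R :> rat)
    & (#|T| = #|E| -> edge_conn E = k /\ k = r)].
Proof.
move=> T_gt1 k_ge2 design_E.
have lower := design_edge_conn_lower design_E T_gt1.
have upper := design_edge_conn_le_degree design_E T_gt1 k_ge2.
have replication := design_replication design_E (ltnW T_gt1).
split.
- rewrite ler_pdivrMr ?ltr0n; last by lia.
  by rewrite -natrM ler_nat (mulnC (edge_conn E)).
- rewrite ler_pdivlMr ?ltr0n; last by lia.
  by rewrite -natrM ler_nat (mulnC _ lam) -replication leq_mul2r upper orbT.
- move=> symmetric; split.
    exact: symmetric_design_edge_conn design_E T_gt1 k_ge2 symmetric.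
  by rewrite (symmetric_design_degree design_E (ltnW T_gt1) symmetric).
Qed.
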